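(* If $G$ is a strongly connected prime tournament, then $G$ is triangle-connected.
   Context: A tournament is a finite, non-null, loopless directed graph in which for any two distinct vertices $u,v$ there is exactly one edge with both ends in $\{u,v\}$; write $u\to v$ for the edge from $u$ to $v$. A homogeneous set of $G$ is a set $X\subseteq V(G)$ such that each $v\in V(G)\setminus X$ either has $v\to x$ for all $x\in X$ or $x\to v$ for all $x\in X$; $G$ is prime if every homogeneous set $X$ satisfies $|X|\le1$ or $X=V(G)$. $G$ is strongly connected if for any two vertices $u,v$ there are directed paths from $u$ to $v$ and from $v$ to $u$. Two cyclic triangles (3-vertex directed cycles) in $G$ are adjacent if they share exactly two vertices; two cyclic triangles $C,C'$ are triangle-connected if there is a sequence $C_1,\dots,C_n$ ($n\ge1$) of cyclic triangles with $C_1=C$, $C_n=C'$, and $C_i$ adjacent to $C_{i+1}$ for all $1\le i\le n-1$. A tournament is triangle-connected if it is strongly connected and any two of its cyclic triangles are triangle-connected. *)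

From mathcomp Require Import all_boot.
Set Implicit Arguments. Unset Strict Implicit. Unset Printing Implicit Defensive.

Definition tournament (T : finType) (e : rel T) : Prop :=
  0 < #|T| /\ (forall v, ~~ e v v) /\
  (forall u v, u != v -> (e u v && ~~ e v u) || (e v u && ~~ e u v)).

Definition homogeneous (T : finType) (e : rel T) (X : {set T}) : Prop :=
  forall v, v \notin X ->
    (forall x, x \in X -> e v x) \/ (forall x, x \in X -> e x v).

Definition prime_tournament (T : finType) (e : rel T) : Prop :=
  forall X : {set T}, homogeneous e X -> #|X| <= 1 \/ X = setT.

Definition strongly_connected (T : finType) (e : rel T) : Prop :=
  forall u v, connect e u v.

Definition cyclic_triangle (T : finType) (e : rel T) (C : {set T}) : bool :=
  [exists a, exists b, exists c,
     (C == [set a; b; c]) && [&& e a b, e b c & e c a]].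

Definition tri_adj (T : finType) (e : rel T) : rel {set T} :=
  fun C C' => [&& cyclic_triangle e C, cyclic_triangle e C' & #|C :&: C'| == 2].

Definition triangle_connected (T : finType) (e : rel T) : Prop :=
  strongly_connected e /\
  forall C C' : {set T}, cyclic_triangle e C -> cyclic_triangle e C' ->
    connect (tri_adj e) C C'.

From mathcomp Require Import all_boot zify.

Set Implicit Arguments. Unset Strict Implicit. Unset Printing Implicit Defensive.

(* The vertices covered by the triangle component of a cyclic triangle form a
   homogeneous set: a vertex u outside it sees every triangle of the component
   from one side only (otherwise u and an edge of that triangle would span an
   adjacent cyclic triangle), and since adjacent triangles share a vertex the
   side is the same for the whole component.  Primality then forces every
   triangle component to cover all vertices.
   Now suppose there are two triangle components, and among the triangles of
   both choose one with an edge x -> y maximising the number of apices, i.e.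
   vertices v with y -> v -> x.  A triangle of the other component through an
   apex consists of apices only: otherwise either a short chain of cyclic
   triangles joins the two components, or an edge of that triangle has strictly
   more apices than x -> y.  Chaining triangles of the other component through
   shared vertices, one of them contains x, which is not an apex. *)

Lemma set3P (T : finType) (a b c t : T) :
  reflect [\/ t = a, t = b | t = c] (t \in [set a; b; c]).
Proof.
apply: (iffP idP) => [|[]->]; rewrite !inE ?eqxx ?orbT //.
by rewrite -orbA => /or3P[]/eqP->; [constructor 1 | constructor 2 | constructor 3].
Qed.

Lemma set3_rot (T : finType) (a b c : T) : [set a; b; c] = [set b; c; a].
Proof. by apply/setP => z; rewrite !inE -orbA orbC. Qed.

Section Tournament.
Variables (T : finType) (e : rel T).
Hypothesis e_irr : forall v, ~~ e v v.
Hypothesis e_total : forall u v, u != v -> (e u v && ~~ e v u) || (e v u && ~~ e u v).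

Local Notation cyclic := (cyclic_triangle e).
Local Notation adj := (tri_adj e).
Local Notation tconnect := (connect (tri_adj e)).

Lemma edge_neq u v : e u v -> u != v.
Proof. by apply: contraTneq => ->; exact: e_irr. Qed.

Lemma edge_asym u v : e u v -> ~~ e v u.
Proof.
move=> euv; case/orP: (e_total (edge_neq euv)) => /andP[// _ nuv].
by rewrite euv in nuv.
Qed.

Lemma edge_trichotomy u v : [\/ u = v, e u v | e v u].
Proof.
have [->|nuv] := eqVneq u v; first by constructor 1.
by case/orP: (e_total nuv) => /andP[euv _]; [constructor 2|constructor 3].
Qed.

Lemma cyclic_triangleP C :
  reflect (exists a b c, [/\ C = [set a; b; c], e a b, e b c & e c a]) (cyclic C).
Proof.
apply: (iffP existsP) => [[a /existsP[b /existsP[c /andP[/eqP-> /and3P[]]]]]|].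
  by exists a, b, c.
case=> a [b [c [-> eab ebc eca]]]; exists a; apply/existsP; exists b.
by apply/existsP; exists c; rewrite eqxx eab ebc eca.
Qed.

Lemma cyclic_triangle3 a b c : e a b -> e b c -> e c a -> cyclic [set a; b; c].
Proof. by move=> eab ebc eca; apply/cyclic_triangleP; exists a, b, c. Qed.

Lemma cyclic_triangle_card C : cyclic C -> #|C| <= 3.
Proof.
by case/cyclic_triangleP => a [b [c [-> _ _ _]]]; rewrite !cardsU !cards1; lia.
Qed.

Lemma tri_adj_sym : symmetric adj.
Proof. by move=> X Y; rewrite /tri_adj setIC andbCA. Qed.

Lemma tconnect_sym : connect_sym adj.
Proof. exact: sym_connect_sym tri_adj_sym. Qed.

Lemma tconnect_ind (P : {set T} -> Prop) R :
  P R -> (forall X Y, tconnect R X -> adj X Y -> P X -> P Y) ->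
  forall X, tconnect R X -> P X.
Proof.
move=> PR step X /connectP[p pR ->] {X}; elim/last_ind: p pR => [//|p Y IHp].
rewrite rcons_path last_rcons => /andP[Rp adjY].
by apply: step adjY (IHp Rp); apply/connectP; exists p.
Qed.

Lemma tconnect_cyclic R X : cyclic R -> tconnect R X -> cyclic X.
Proof. by move=> cR; apply: (tconnect_ind (P := cyclic)) => // X0 Y _ /and3P[]. Qed.

Lemma tri_adj_meet X Y : adj X Y -> exists2 t, t \in X & t \in Y.
Proof.
case/and3P=> _ _ /eqP XY2.
have /set0Pn[t] : X :&: Y != set0 by rewrite -card_gt0 XY2.
by rewrite inE => /andP[]; exists t.
Qed.

Lemma tconnect_shared X Y u w : cyclic X -> cyclic Y -> u != w ->
  u \in X -> w \in X -> u \in Y -> w \in Y -> tconnect X Y.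
Proof.
move=> cX cY nuw uX wX uY wY.
have [<-|nXY] := eqVneq X Y; first exact: connect0.
apply: connect1; rewrite /tri_adj cX cY eqn_leq.
have -> : 2 <= #|X :&: Y|.
  have <- : #|[set u; w]| = 2 by rewrite cards2 nuw.
  apply: subset_leq_card; apply/subsetP => z.
  by rewrite !inE => /orP[]/eqP->; apply/andP.
rewrite andbT leqNgt; apply: contra nXY => XY3.
have XYX : X :&: Y == X by rewrite eqEcard subsetIl; have := cyclic_triangle_card cX; lia.
have XYY : X :&: Y == Y by rewrite eqEcard subsetIr; have := cyclic_triangle_card cY; lia.
by rewrite -(eqP XYX) (eqP XYY).
Qed.

Lemma tconnect_edge a b c a' b' c' u w :
  e a b -> e b c -> e c a -> e a' b' -> e b' c' -> e c' a' -> e u w ->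
  u \in [set a; b; c] -> w \in [set a; b; c] ->
  u \in [set a'; b'; c'] -> w \in [set a'; b'; c'] ->
  tconnect [set a; b; c] [set a'; b'; c'].
Proof.
move=> eab ebc eca eab' ebc' eca' euw.
by apply: tconnect_shared (edge_neq euw); apply: cyclic_triangle3.
Qed.

Lemma cyclic_triangle_outside X u : cyclic X -> u \notin X ->
  [\/ {in X, forall t, e u t}, {in X, forall t, e t u} |
      exists a b, [/\ a \in X, b \in X, e a b, e b u & e u a]].
Proof.
case/cyclic_triangleP => p [q [r [-> epq eqr erp]]].
rewrite !inE => /norP[/norP[nup nuq] nur].
have flip z : u != z -> ~~ e u z -> e z u.
  by move=> nuz; case/orP: (e_total nuz) => /andP[-> //].
case: (boolP (e u p)) => [up|/(flip _ nup) pu];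
case: (boolP (e u q)) => [uq|/(flip _ nuq) qu];
case: (boolP (e u r)) => [ur|/(flip _ nur) ru].
- by constructor 1 => t /set3P[]->.
- by constructor 3; exists q, r; rewrite !inE !eqxx ?orbT.
- by constructor 3; exists p, q; rewrite !inE !eqxx ?orbT.
- by constructor 3; exists p, q; rewrite !inE !eqxx ?orbT.
- by constructor 3; exists r, p; rewrite !inE !eqxx ?orbT.
- by constructor 3; exists q, r; rewrite !inE !eqxx ?orbT.
- by constructor 3; exists r, p; rewrite !inE !eqxx ?orbT.
- by constructor 2 => t /set3P[]->.
Qed.

Definition triangle_span (R : {set T}) := [set v | [exists X, tconnect R X && (v \in X)]].

Lemma mem_triangle_span R X v : tconnect R X -> v \in X -> v \in triangle_span R.
Proof. by move=> RX vX; rewrite inE; apply/existsP; exists X; rewrite RX. Qed.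

Lemma triangle_span_homogeneous R : cyclic R -> homogeneous e (triangle_span R).
Proof.
move=> cR u u_out.
have uniform X : tconnect R X -> {in X &, forall t t', e u t = e u t'}.
  move=> RX; have cX := tconnect_cyclic cR RX.
  have uX : u \notin X by apply: contra u_out; apply: mem_triangle_span.
  case: (cyclic_triangle_outside cX uX) => [out|inn|[a [b [aX bX eab ebu eua]]]].
  - by move=> t t' tX t'X; rewrite !out.
  - by move=> t t' tX t'X; rewrite !(negbTE (edge_asym (inn _ _))).
  case/negP: u_out; apply: (mem_triangle_span (X := [set a; b; u])); last first.
    by rewrite !inE eqxx orbT.
  apply: connect_trans RX _; apply: tconnect_shared (edge_neq eab) _ _ _ _ => //.
  - exact: cyclic_triangle3.
  - by rewrite !inE eqxx.
  - by rewrite !inE eqxx orbT.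
case/cyclic_triangleP: (cR) => r [b [c [ER _ _ _]]].
have rR : r \in R by rewrite ER !inE eqxx.
have same_side : forall X, tconnect R X -> {in X, forall t, e u t = e u r}.
  apply: (tconnect_ind (P := fun X => {in X, forall t, e u t = e u r})).
    by move=> t tR; apply: uniform (connect0 _ _) _ _ tR rR.
  move=> X Y RX XY sideX t tY; have [s sX sY] := tri_adj_meet XY.
  by rewrite -(sideX s sX); apply: uniform (connect_trans RX (connect1 XY)) _ _ tY sY.
have side v : v \in triangle_span R -> e u v = e u r.
  by rewrite inE => /existsP[X /andP[RX vX]]; apply: same_side RX _ vX.
case: (boolP (e u r)) => ur; [left|right] => v vS; rewrite ?side //.
have nuv : u != v by apply: contraNneq u_out => ->.
by case/orP: (e_total nuv) => /andP[]; rewrite side // (negbTE ur).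
Qed.

Lemma triangle_cover R v : prime_tournament e -> cyclic R ->
  exists2 X, tconnect R X & v \in X.
Proof.
move=> pr cR; suff : v \in triangle_span R by rewrite inE => /existsP[X /andP[]]; exists X.
case: (pr _ (triangle_span_homogeneous cR)) => [small|-> //].
case/cyclic_triangleP: (cR) => a [b [c [ER eab _ _]]].
have : [set a; b] \subset triangle_span R.
  apply/subsetP => z /set2P[]->; apply: mem_triangle_span (connect0 _ R) _;
  by rewrite ER !inE eqxx ?orbT.
by move=> /subset_leq_card; rewrite cards2 (edge_neq eab) => /leq_trans/(_ small).
Qed.

Definition apices x y := [set v | e y v && e v x].

Local Ltac tri_link u w :=
  apply: (tconnect_edge (u := u) (w := w)); rewrite ?inE ?eqxx ?orbT ?orTb.

Section FarTriangles.
Variables x y a b c : T.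
Hypotheses (exy : e x y) (eya : e y a) (eax : e a x).
Hypotheses (eab : e a b) (ebc : e b c) (eca : e c a).
Hypothesis far : ~~ tconnect [set x; y; a] [set a; b; c].

Lemma far_triangle_edge_cx : e c x.
Proof.
case: (edge_trichotomy c x) => [ecx|//|exc]; case/negP: far; first by subst c; tri_link a x.
by apply: (connect_trans (y := [set a; x; c])); [tri_link a x | tri_link c a].
Qed.

Lemma far_triangle_edge_yb : e y b.
Proof.
case: (edge_trichotomy y b) => [eyb|//|eby]; case/negP: far; first by subst b; tri_link y a.
by apply: (connect_trans (y := [set a; b; y])); [tri_link y a | tri_link a b].
Qed.

Lemma far_triangle_apices_proper : e x b -> apices x y \proper apices b c.
Proof.
move=> exb; have ecx := far_triangle_edge_cx; have eyb := far_triangle_edge_yb.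
have Z1C : tconnect [set x; b; c] [set a; b; c] by tri_link b c.
have ecy : e c y.
  case: (edge_trichotomy c y) => [ecy|//|eyc].
    by move: (edge_asym exy); rewrite -ecy ecx.
  case/negP: far; apply: (connect_trans (y := [set x; y; c])); first by tri_link x y.
  by apply: connect_trans Z1C; tri_link c x.
have Z2C : tconnect [set b; c; y] [set a; b; c] by tri_link b c.
apply/properP; split; last by exists x; rewrite !inE ?ecx ?exb ?(negbTE (e_irr x)) ?andbF.
apply/subsetP => v; rewrite !inE => /andP[eyv evx].
have DV : tconnect [set x; y; a] [set x; y; v] by tri_link x y.
apply/andP; split.
- case: (edge_trichotomy c v) => [ecv|//|evc].
    by move: (edge_asym ecy); rewrite ecv eyv.
  case/negP: far; apply: connect_trans DV _.
  apply: (connect_trans (y := [set v; c; y])); first by tri_link y v.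
  by apply: connect_trans Z2C; tri_link c y.
- case: (edge_trichotomy v b) => [evb|//|ebv].
    by move: (edge_asym exb); rewrite -evb evx.
  case/negP: far; apply: connect_trans DV _.
  apply: (connect_trans (y := [set b; v; x])); first by tri_link v x.
  by apply: connect_trans Z1C; tri_link x b.
Qed.

Lemma far_triangle_apices :
  #|apices b c| <= #|apices x y| -> (b \in apices x y) && (c \in apices x y).
Proof.
move=> le_bc_xy; have eyb := far_triangle_edge_yb; have ecx := far_triangle_edge_cx.
rewrite !inE eyb ecx andbT /=.
case: (edge_trichotomy b x) => [ebx|ebx|exb].
- by move: (edge_asym exy); rewrite -ebx eyb.
- rewrite ebx /=; case: (edge_trichotomy y c) => [eyc|//|ecy].
    by move: (edge_asym exy); rewrite eyc ecx.
  case/negP: far; apply: (connect_trans (y := [set b; x; y])); first by tri_link x y.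
  by apply: (connect_trans (y := [set b; c; y])); [tri_link y b | tri_link b c].
- by have := proper_card (far_triangle_apices_proper exb); rewrite ltnNge le_bc_xy.
Qed.

End FarTriangles.

Section Extremal.
Hypothesis e_prime : prime_tournament e.
Variables (R : {set T}) (x y : T).
Hypotheses (cR : cyclic R) (exy : e x y).
Hypothesis apices_far : forall v, v \in apices x y -> ~~ tconnect [set x; y; v] R.
Hypothesis extremal : forall u w z, e u w -> e w z -> e z u ->
  tconnect R [set u; w; z] -> #|apices u w| <= #|apices x y|.

Lemma apices_triangle_closed a b c : e a b -> e b c -> e c a ->
  tconnect R [set a; b; c] -> a \in apices x y -> [set a; b; c] \subset apices x y.
Proof.
move=> eab ebc eca RC aS; have /andP[eya eax] : e y a && e a x by rewrite inE in aS.
have /andP[bS cS] : (b \in apices x y) && (c \in apices x y).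
  apply: (far_triangle_apices exy eya eax eab ebc eca).
    move: (apices_far aS); apply: contra => DC; apply: connect_trans DC _.
    by rewrite tconnect_sym.
  by apply: (extremal ebc eca eab); rewrite -set3_rot.
by rewrite !subUset !sub1set aS bS cS.
Qed.

Lemma apices_component_closed X t : tconnect R X -> t \in X -> t \in apices x y ->
  X \subset apices x y.
Proof.
move=> RX; have /cyclic_triangleP[p [q [r [EX epq eqr erp]]]] := tconnect_cyclic cR RX.
rewrite EX in RX *; case/set3P => -> tS.
- by apply: apices_triangle_closed RX tS.
- by rewrite set3_rot in RX *; apply: apices_triangle_closed RX tS.
- by rewrite -set3_rot in RX *; apply: apices_triangle_closed RX tS.
Qed.

Lemma apices_far_eq0 : apices x y = set0.
Proof.
apply/setP => a; rewrite in_set0; apply/negP => aS.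
have [Ta RTa aTa] := triangle_cover a e_prime cR.
have [Tx RTx xTx] := triangle_cover x e_prime cR.
have TaTx : tconnect Ta Tx by apply: connect_trans RTx; rewrite tconnect_sym.
have : Tx \subset apices x y.
  apply: (tconnect_ind (P := fun X => X \subset apices x y)) TaTx.
    exact: apices_component_closed RTa aTa aS.
  move=> X Y TaX XY XS; have [t tX tY] := tri_adj_meet XY.
  apply: apices_component_closed tY (subsetP XS t tX).
  exact: connect_trans RTa (connect_trans TaX (connect1 XY)).
by move/subsetP/(_ x xTx); rewrite inE (negbTE (e_irr x)) andbF.
Qed.

End Extremal.

Lemma cyclic_triangles_connected C C' : prime_tournament e ->
  cyclic C -> cyclic C' -> tconnect C C'.
Proof.
move=> pr cC cC'; apply/negPn/negP => nCC'.
pose in_components (t : T * T * T) := let: (u, w, z) := t in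
  [&& e u w, e w z, e z u & tconnect C [set u; w; z] || tconnect C' [set u; w; z]].
case/cyclic_triangleP: (cC) => a [b [c [EC eab ebc eca]]].
have abc_in : in_components (a, b, c) by rewrite /= eab ebc eca -EC connect0.
case: (arg_maxnP (fun t => #|apices t.1.1 t.1.2|) abc_in) => [[[x y] a0]].
move=> /and4P[exy eya eax CD] extremal.
have extremal_far R R' : cyclic R' -> tconnect R [set x; y; a0] ->
    ~~ tconnect R R' -> R' = C \/ R' = C' -> False.
  move=> cR' RD nRR' R'C; have a0S : a0 \in apices x y by rewrite inE eya eax.
  suff : apices x y = set0 by move/setP/(_ a0); rewrite a0S inE.
  apply: (apices_far_eq0 pr cR' exy) => [v|u w z euw ewz ezu R'T].
    rewrite inE => /andP[eyv evx]; move: nRR'; apply: contra => VR'.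
    by apply: connect_trans RD (connect_trans _ VR'); tri_link x y.
  apply: (extremal (u, w, z)); rewrite /= euw ewz ezu.
  by case: R'C R'T => <- ->; rewrite ?orbT.
case/orP: CD => [CD|C'D]; first exact: extremal_far cC' CD nCC' (or_intror erefl).
by apply: extremal_far cC C'D _ (or_introl erefl); rewrite tconnect_sym.
Qed.

End Tournament.

Theorem theorem4p1 (T : finType) (e : rel T) :
  tournament e -> strongly_connected e -> prime_tournament e ->
  triangle_connected e.
Proof.
move=> [_ [e_irr e_total]] e_strong e_prime; split=> // C C' cC cC'.
exact: cyclic_triangles_connected.
Qed.
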